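(* For every integer $d\ge 2$, $\mathcal Q_d$ is dense in $\mathcal A_d$; consequently the spaces $\mathcal P_d$ and $\mathcal O_d$ are also dense in $\mathcal A_d$.
   Context: A polynomial knot is a map $\phi:\mathbb R\to\mathbb R^3$ with real polynomial components which is a smooth embedding ($\phi$ injective and $\phi'(t)\ne0$ for all $t$). For $d\ge2$, $\mathcal A_d$ is the set of polynomial maps $t\mapsto(f(t),g(t),h(t))$ with $\deg f\le d-2$, $\deg g\le d-1$, $\deg h\le d$ (zero polynomial allowed, degree $-\infty$), topologized via the bijection with Euclidean $\mathbb R^{3d}$ sending $(f,g,h)$ to its coefficient vector $(a_0,\dots,a_{d-2},b_0,\dots,b_{d-1},c_0,\dots,c_d)$, where $f=\sum a_it^i$, $g=\sum b_it^i$, $h=\sum c_it^i$. $\mathcal O_d$ is the set of polynomial knots in $\mathcal A_d$; $\mathcal P_d$ is the set of polynomial knots $(f,g,h)$ with $\deg f<\deg g<\deg h\le d$; $\mathcal Q_d$ is the set of polynomial knots $(f,g,h)$ with $\deg f=d-2$, $\deg g=d-1$, $\deg h=d$ exactly. *)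

From Stdlib Require Import Reals ZArith.
Open Scope R_scope.

(* A coefficient vector (a_0,...,a_n) is represented by a : nat -> R,
   of which only the entries a 0, ..., a n are used. *)
Definition poly_eval (a : nat -> R) (n : nat) (t : R) : R :=
  sum_f_R0 (fun i => a i * t ^ i) n.

(* Degree of the polynomial with coefficients a_0..a_n, with the zero
   polynomial having degree -1 (standing for -infinity). *)
Definition has_deg (a : nat -> R) (n : nat) (k : Z) : Prop :=
  (k = (-1)%Z /\ forall i, (i <= n)%nat -> a i = 0) \/
  (exists m : nat, k = Z.of_nat m /\ (m <= n)%nat /\ a m <> 0 /\
     forall i, (m < i <= n)%nat -> a i = 0).

Definition is_knot (f g h : R -> R) : Prop :=
  (forall s t, f s = f t -> g s = g t -> h s = h t -> s = t) /\
  (forall t, exists df dg dh,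
     derivable_pt_lim f t df /\ derivable_pt_lim g t dg /\
     derivable_pt_lim h t dh /\ ~ (df = 0 /\ dg = 0 /\ dh = 0)).

(* A point of A_d: coefficient vectors a (length d-1), b (length d), c (length d+1). *)
Definition knot_of (d : nat) (a b c : nat -> R) : Prop :=
  is_knot (poly_eval a (d - 2)) (poly_eval b (d - 1)) (poly_eval c d).

Definition in_O (d : nat) (a b c : nat -> R) : Prop := knot_of d a b c.

(* P_d (intersected with A_d, which it is contained in) *)
Definition in_P (d : nat) (a b c : nat -> R) : Prop :=
  knot_of d a b c /\
  exists kf kg kh, has_deg a (d - 2) kf /\ has_deg b (d - 1) kg /\
    has_deg c d kh /\ (kf < kg < kh)%Z.

Definition in_Q (d : nat) (a b c : nat -> R) : Prop :=
  knot_of d a b c /\ a (d - 2)%nat <> 0 /\ b (d - 1)%nat <> 0 /\ c d <> 0.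

Definition A_dist (d : nat) (a b c a' b' c' : nat -> R) : R :=
  sqrt (sum_f_R0 (fun i => (a i - a' i) ^ 2) (d - 2)
      + sum_f_R0 (fun i => (b i - b' i) ^ 2) (d - 1)
      + sum_f_R0 (fun i => (c i - c' i) ^ 2) d).

Definition dense_in_A (d : nat) (S : (nat -> R) -> (nat -> R) -> (nat -> R) -> Prop) : Prop :=
  forall (a b c : nat -> R) (eps : R), 0 < eps ->
    exists a' b' c', S a' b' c' /\ A_dist d a b c a' b' c' < eps.

(* A small change of the top coefficients makes the degrees exactly d-2, d-1, d;
   a further small change of the linear coefficients then makes the curve a
   knot.  The curve is a knot as soon as the divided differences
   (f(s)-f(t))/(s-t), ... of its components never vanish simultaneously on
   R^2, the diagonal giving the derivatives.  Adding (x, y, z) to the linear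
   coefficients adds (x, y, z) to the divided differences.  For d >= 4 one of
   the last two components has odd degree >= 3, which confines the common
   zeros to a fixed square; there the divided-difference map is Lipschitz, so
   its image is two-dimensional in R^3 and misses -(x, y, z) for some
   arbitrarily small (x, y, z).  For d = 2, 3 a component of degree one has a
   constant nonzero divided difference. *)

From Stdlib Require Import Reals ZArith.
From Stdlib Require Import Lra Lia Psatz List ClassicalEpsilon Classical.
Open Scope R_scope.

(* [pow_dd i s t] is the divided difference (s^i - t^i)/(s - t), written as
   a polynomial so that on the diagonal it is the derivative i t^(i-1). *)
Fixpoint pow_dd (i : nat) (s t : R) : R :=
  match i with O => 0 | S j => s ^ j + t * pow_dd j s t end.

Definition poly_dd (a : nat -> R) (n : nat) (s t : R) : R :=
  sum_f_R0 (fun i => a i * pow_dd i s t) n.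

Lemma poly_dd_S a n s t :
  poly_dd a (S n) s t = poly_dd a n s t + a (S n) * pow_dd (S n) s t.
Proof. apply tech5. Qed.

Lemma pow_dd_mul_sub i s t : (s - t) * pow_dd i s t = s ^ i - t ^ i.
Proof.
  induction i as [|i IH]; simpl; [ring|].
  transitivity ((s - t) * s ^ i + t * ((s - t) * pow_dd i s t)); [ring|].
  rewrite IH. ring.
Qed.

Lemma poly_eval_sub a n s t :
  poly_eval a n s - poly_eval a n t = (s - t) * poly_dd a n s t.
Proof.
  induction n as [|n IH].
  - unfold poly_eval, poly_dd; simpl. ring.
  - unfold poly_eval in *. rewrite !tech5, poly_dd_S, Rmult_plus_distr_l, <- IH.
    replace ((s - t) * (a (S n) * pow_dd (S n) s t))
      with (a (S n) * ((s - t) * pow_dd (S n) s t)) by ring.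
    rewrite pow_dd_mul_sub. ring.
Qed.

Lemma pow_dd_diag i t : pow_dd i t t = INR i * t ^ pred i.
Proof.
  induction i as [|i IH]; [simpl; ring|].
  change (pow_dd (S i) t t) with (t ^ i + t * pow_dd i t t). rewrite IH.
  destruct i; [simpl; ring|].
  rewrite (S_INR (S i)). simpl pred. simpl pow. ring.
Qed.

Lemma derivable_pt_lim_poly_eval a n t :
  derivable_pt_lim (poly_eval a n) t (poly_dd a n t t).
Proof.
  induction n as [|n IH].
  - unfold poly_dd; simpl. rewrite Rmult_0_r.
    apply (derivable_pt_lim_const (a 0%nat * 1)).
  - rewrite poly_dd_S, pow_dd_diag.
    apply (derivable_pt_lim_plus (poly_eval a n) (fun x => a (S n) * x ^ S n)); [exact IH|].
    apply (derivable_pt_lim_scal (fun x => x ^ S n)), derivable_pt_lim_pow.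
Qed.

Lemma poly_dd_zero_of_eval_eq a n s t :
  s <> t -> poly_eval a n s = poly_eval a n t -> poly_dd a n s t = 0.
Proof.
  intros Hst E. apply (Rmult_eq_reg_l (s - t)); [|lra].
  rewrite <- poly_eval_sub, E. ring.
Qed.

Lemma knot_of_poly_dd d a b c :
  (forall s t, ~ (poly_dd a (d - 2) s t = 0 /\ poly_dd b (d - 1) s t = 0 /\
                  poly_dd c d s t = 0)) ->
  knot_of d a b c.
Proof.
  intros Hdd. split.
  - intros s t E1 E2 E3. apply NNPP. intros Hst. apply (Hdd s t).
    split; [|split]; apply poly_dd_zero_of_eval_eq; assumption.
  - intros t. exists (poly_dd a (d - 2) t t), (poly_dd b (d - 1) t t), (poly_dd c d t t).
    repeat split; try apply derivable_pt_lim_poly_eval. apply Hdd.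
Qed.

Section Square.

Variable R0 : R.

Definition bounded_on (B : R) (phi : R -> R -> R) : Prop :=
  forall s t, Rabs s <= R0 -> Rabs t <= R0 -> Rabs (phi s t) <= B.

Definition lipschitz_on (L : R) (phi : R -> R -> R) : Prop :=
  forall s t s' t', Rabs s <= R0 -> Rabs t <= R0 -> Rabs s' <= R0 -> Rabs t' <= R0 ->
    Rabs (phi s t - phi s' t') <= L * (Rabs (s - s') + Rabs (t - t')).

Definition regular_on (phi : R -> R -> R) : Prop :=
  exists B L, bounded_on B phi /\ lipschitz_on L phi.

Lemma lipschitz_on_weaken L L' phi :
  L <= L' -> lipschitz_on L phi -> lipschitz_on L' phi.
Proof.
  intros HL Hphi s t s' t' Hs Ht Hs' Ht'.
  pose proof (Rabs_pos (s - s')). pose proof (Rabs_pos (t - t')).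
  specialize (Hphi s t s' t' Hs Ht Hs' Ht'). nra.
Qed.

Lemma regular_on_const c : regular_on (fun _ _ => c).
Proof.
  exists (Rabs c), 0. split; [intros s t _ _; lra|].
  intros s t s' t' _ _ _ _. rewrite Rminus_diag, Rabs_R0, Rmult_0_l. lra.
Qed.

Lemma regular_on_fst : regular_on (fun s _ => s).
Proof.
  exists R0, 1. split; [intros s t Hs _; exact Hs|].
  intros s t s' t' _ _ _ _. pose proof (Rabs_pos (t - t')). lra.
Qed.

Lemma regular_on_snd : regular_on (fun _ t => t).
Proof.
  exists R0, 1. split; [intros s t _ Ht; exact Ht|].
  intros s t s' t' _ _ _ _. pose proof (Rabs_pos (s - s')). lra.
Qed.

Lemma regular_on_plus f g :
  regular_on f -> regular_on g -> regular_on (fun s t => f s t + g s t).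
Proof.
  intros [Bf [Lf [Hbf Hlf]]] [Bg [Lg [Hbg Hlg]]]. exists (Bf + Bg), (Lf + Lg). split.
  - intros s t Hs Ht. specialize (Hbf s t Hs Ht). specialize (Hbg s t Hs Ht).
    eapply Rle_trans; [apply Rabs_triang|lra].
  - intros s t s' t' Hs Ht Hs' Ht'.
    specialize (Hlf s t s' t' Hs Ht Hs' Ht'). specialize (Hlg s t s' t' Hs Ht Hs' Ht').
    replace (f s t + g s t - (f s' t' + g s' t'))
      with ((f s t - f s' t') + (g s t - g s' t')) by ring.
    eapply Rle_trans; [apply Rabs_triang|lra].
Qed.

Lemma regular_on_mult f g :
  regular_on f -> regular_on g -> regular_on (fun s t => f s t * g s t).
Proof.
  intros [Bf [Lf [Hbf Hlf]]] [Bg [Lg [Hbg Hlg]]].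
  exists (Bf * Bg), (Bf * Rabs Lg + Bg * Rabs Lf). split.
  - intros s t Hs Ht. rewrite Rabs_mult.
    apply Rmult_le_compat; try apply Rabs_pos; auto.
  - intros s t s' t' Hs Ht Hs' Ht'.
    set (D := Rabs (s - s') + Rabs (t - t')).
    assert (HD : 0 <= D)
      by (pose proof (Rabs_pos (s - s')); pose proof (Rabs_pos (t - t')); unfold D; lra).
    assert (Ef : Rabs (f s t - f s' t') <= Rabs Lf * D).
    { eapply Rle_trans; [apply Hlf; auto|]. apply Rmult_le_compat_r; [lra|apply Rle_abs]. }
    assert (Eg : Rabs (g s t - g s' t') <= Rabs Lg * D).
    { eapply Rle_trans; [apply Hlg; auto|]. apply Rmult_le_compat_r; [lra|apply Rle_abs]. }
    replace (f s t * g s t - f s' t' * g s' t')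
      with (f s t * (g s t - g s' t') + g s' t' * (f s t - f s' t')) by ring.
    eapply Rle_trans; [apply Rabs_triang|]. rewrite !Rabs_mult.
    rewrite Rmult_plus_distr_r, !Rmult_assoc.
    apply Rplus_le_compat; apply Rmult_le_compat; auto using Rabs_pos.
Qed.

Lemma regular_on_sum (F : nat -> R -> R -> R) n :
  (forall i, regular_on (F i)) -> regular_on (fun s t => sum_f_R0 (fun i => F i s t) n).
Proof.
  intros HF. induction n as [|n IH]; [apply HF|].
  apply (regular_on_plus (fun s t => sum_f_R0 (fun i => F i s t) n) (F (S n))); auto.
Qed.

Lemma regular_on_pow i : regular_on (fun s _ => s ^ i).
Proof.
  induction i as [|i IH]; [apply (regular_on_const 1)|].
  apply (regular_on_mult (fun s _ => s) (fun s _ => s ^ i) regular_on_fst IH).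
Qed.

Lemma regular_on_pow_dd i : regular_on (pow_dd i).
Proof.
  induction i as [|i IH]; [apply (regular_on_const 0)|].
  apply (regular_on_plus (fun s _ => s ^ i) (fun s t => t * pow_dd i s t));
    [apply regular_on_pow|].
  apply (regular_on_mult (fun _ t => t) (pow_dd i) regular_on_snd IH).
Qed.

Lemma regular_on_poly_dd a n : regular_on (poly_dd a n).
Proof.
  apply (regular_on_sum (fun i s t => a i * pow_dd i s t)). intros i.
  apply (regular_on_mult (fun _ _ => a i) (pow_dd i)), regular_on_pow_dd.
  apply regular_on_const.
Qed.

End Square.

Lemma grid_point_near (h x : R) (K : nat) :
  0 < h -> 0 <= x <= INR K * h -> exists u, (u <= K)%nat /\ Rabs (x - INR u * h) <= h.
Proof.
  intros Hh. induction K as [|K IH]; intros Hx.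
  - exists 0%nat. split; [lia|]. simpl in *. rewrite Rmult_0_l, Rminus_0_r, Rabs_right; lra.
  - destruct (Rle_dec x (INR K * h)) as [Hle|Hgt].
    + destruct IH as [u [Hu Hxu]]; [lra|]. exists u. split; [lia|exact Hxu].
    + exists (S K). split; [lia|]. rewrite S_INR in *.
      unfold Rabs; destruct Rcase_abs; lra.
Qed.

Lemma nat_eq_of_close (eta r x : R) (i j : nat) :
  0 < eta -> 2 * r < eta ->
  Rabs (x + INR i * eta) <= r -> Rabs (x + INR j * eta) <= r -> i = j.
Proof.
  intros Heta Hr Hi Hj.
  assert (Hij : Rabs (INR i - INR j) * eta < eta).
  { rewrite <- (Rabs_right eta) at 1 by lra. rewrite <- Rabs_mult.
    revert Hi Hj. unfold Rabs; repeat destruct Rcase_abs; intros; nra. }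
  assert (Hlt : Rabs (INR i - INR j) < 1) by (apply (Rmult_lt_reg_r eta); lra).
  destruct (Nat.lt_total i j) as [Hl|[E|Hl]]; auto; exfalso; apply le_INR in Hl;
    rewrite S_INR in Hl; revert Hlt; unfold Rabs; destruct Rcase_abs; lra.
Qed.

Lemma NoDup_list_prod {A B : Type} (l : list A) (l' : list B) :
  NoDup l -> NoDup l' -> NoDup (list_prod l l').
Proof.
  intros Hl Hl'. induction Hl as [|x l Hx Hl IH]; simpl; [constructor|].
  apply NoDup_app; auto.
  - apply NoDup_map_NoDup_ForallPairs; [intros y z _ _ E; congruence|exact Hl'].
  - intros [y z] Hin Hin2. apply in_map_iff in Hin as [w [Ew _]]. inversion Ew; subst.
    apply in_prod_iff in Hin2 as [Hin2 _]. contradiction.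
Qed.

Lemma length_le_of_injective_on {A B : Type} (l : list A) (l' : list B) (g : A -> B) :
  NoDup l -> (forall x, In x l -> In (g x) l') ->
  (forall x y, In x l -> In y l -> g x = g y -> x = y) ->
  (length l <= length l')%nat.
Proof.
  intros Hl Hmaps Hinj. rewrite <- (length_map g l).
  apply NoDup_incl_length; [|intros y Hy; apply in_map_iff in Hy as [x [<- Hx]]; auto].
  apply NoDup_map_NoDup_ForallPairs; [|exact Hl]. intros x y Hx Hy. apply Hinj; auto.
Qed.

Section LipschitzImage.

Variables (R0 L : R) (phi1 phi2 phi3 : R -> R -> R).
Hypotheses (HR0 : 0 < R0) (HL : 0 < L).
Hypotheses (Hphi1 : lipschitz_on R0 L phi1) (Hphi2 : lipschitz_on R0 L phi2)
  (Hphi3 : lipschitz_on R0 L phi3).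

Definition hits (x y z : R) : Prop :=
  exists s t, Rabs s <= R0 /\ Rabs t <= R0 /\
    phi1 s t + x = 0 /\ phi2 s t + y = 0 /\ phi3 s t + z = 0.

Let mesh (K : nat) : R := 2 * R0 / INR K.

Let node (K u : nat) : R := - R0 + INR u * mesh K.

Lemma node_in_square K u : (0 < K)%nat -> (u <= K)%nat -> Rabs (node K u) <= R0.
Proof.
  intros HK Hu. apply lt_0_INR in HK. apply le_INR in Hu. unfold node, mesh.
  assert (0 <= INR u * (2 * R0 / INR K) <= 2 * R0).
  { split; [apply Rmult_le_pos; [apply pos_INR|left; apply Rdiv_lt_0_compat; lra]|].
    replace (2 * R0) with (INR K * (2 * R0 / INR K)) at 2 by (field; lra).
    apply Rmult_le_compat_r; [left; apply Rdiv_lt_0_compat|]; lra. }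
  unfold Rabs; destruct Rcase_abs; lra.
Qed.

Lemma node_near K s : (0 < K)%nat -> Rabs s <= R0 ->
  exists u, (u <= K)%nat /\ Rabs (node K u - s) <= mesh K.
Proof.
  intros HK Hs. apply lt_0_INR in HK.
  assert (Hh : 0 < mesh K) by (apply Rdiv_lt_0_compat; lra).
  destruct (grid_point_near (mesh K) (s + R0) K Hh) as [u [Hu Hsu]].
  { unfold mesh. replace (INR K * (2 * R0 / INR K)) with (2 * R0) by (field; lra).
    revert Hs. unfold Rabs; destruct Rcase_abs; lra. }
  exists u. split; [exact Hu|]. unfold node.
  replace (- R0 + INR u * mesh K - s) with (- (s + R0 - INR u * mesh K)) by ring.
  rewrite Rabs_Ropp. exact Hsu.
Qed.

Lemma hits_near_grid K x y z : (0 < K)%nat -> hits x y z ->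
  exists u v, (u <= K)%nat /\ (v <= K)%nat /\
    Rabs (phi1 (node K u) (node K v) + x) <= 2 * L * mesh K /\
    Rabs (phi2 (node K u) (node K v) + y) <= 2 * L * mesh K /\
    Rabs (phi3 (node K u) (node K v) + z) <= 2 * L * mesh K.
Proof.
  intros HK [s [t [Hs [Ht [E1 [E2 E3]]]]]].
  destruct (node_near K s HK Hs) as [u [Hu Hsu]].
  destruct (node_near K t HK Ht) as [v [Hv Htv]].
  exists u, v. split; [exact Hu|]. split; [exact Hv|].
  pose proof (node_in_square K u HK Hu) as Nu. pose proof (node_in_square K v HK Hv) as Nv.
  assert (Hclose : forall phi w, lipschitz_on R0 L phi -> phi s t + w = 0 ->
            Rabs (phi (node K u) (node K v) + w) <= 2 * L * mesh K).
  { intros phi w Hphi Ew.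
    replace (phi (node K u) (node K v) + w) with (phi (node K u) (node K v) - phi s t) by lra.
    eapply Rle_trans; [apply Hphi; auto|]. nra. }
  repeat split; apply Hclose; assumption.
Qed.

Let cube (N : nat) : list (nat * nat * nat) :=
  list_prod (list_prod (seq 0 N) (seq 0 N)) (seq 0 N).

Lemma hits_grid_card N K eta : (0 < K)%nat -> 0 < eta -> 4 * L * mesh K < eta ->
  (forall i j k, (i < N)%nat -> (j < N)%nat -> (k < N)%nat ->
     hits (INR i * eta) (INR j * eta) (INR k * eta)) ->
  (N * N * N <= S K * S K)%nat.
Proof.
  intros HK Heta Hsep Hhits.
  set (near := fun (x : nat * nat * nat) (uv : nat * nat) =>
    let '(i, j, k) := x in let '(u, v) := uv in
    (u <= K)%nat /\ (v <= K)%nat /\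
    Rabs (phi1 (node K u) (node K v) + INR i * eta) <= 2 * L * mesh K /\
    Rabs (phi2 (node K u) (node K v) + INR j * eta) <= 2 * L * mesh K /\
    Rabs (phi3 (node K u) (node K v) + INR k * eta) <= 2 * L * mesh K).
  assert (Hnear : forall x, In x (cube N) -> exists uv, near x uv).
  { intros [[i j] k] Hx. unfold cube in Hx.
    apply in_prod_iff in Hx as [Hx Hk]. apply in_prod_iff in Hx as [Hi Hj].
    apply in_seq in Hi, Hj, Hk.
    destruct (hits_near_grid K _ _ _ HK (Hhits i j k ltac:(lia) ltac:(lia) ltac:(lia)))
      as [u [v Huv]].
    exists (u, v). exact Huv. }
  set (g := fun x => epsilon (inhabits (0%nat, 0%nat)) (near x)).
  assert (Hg : forall x, In x (cube N) -> near x (g x)).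
  { intros x Hx. apply epsilon_spec, Hnear, Hx. }
  assert (Hsep' : 2 * (2 * L * mesh K) < eta) by lra.
  pose proof (length_le_of_injective_on (cube N) (list_prod (seq 0 (S K)) (seq 0 (S K))) g)
    as Hcard.
  unfold cube in Hcard. rewrite !length_prod, !length_seq in Hcard. apply Hcard.
  - repeat apply NoDup_list_prod; apply seq_NoDup.
  - intros x Hx. specialize (Hg x Hx). destruct (g x) as [u v].
    destruct x as [[i j] k]. destruct Hg as [Hu [Hv _]].
    apply in_prod_iff. split; apply in_seq; lia.
  - intros x y Hx Hy Exy.
    pose proof (Hg y Hy) as Gy. pose proof (Hg x Hx) as Gx. rewrite Exy in Gx.
    destruct (g y) as [u v]. destruct x as [[i j] k], y as [[i' j'] k'].
    destruct Gx as [_ [_ [X1 [X2 X3]]]], Gy as [_ [_ [Y1 [Y2 Y3]]]].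
    rewrite (nat_eq_of_close _ _ _ _ _ Heta Hsep' X1 Y1),
      (nat_eq_of_close _ _ _ _ _ Heta Hsep' X2 Y2),
      (nat_eq_of_close _ _ _ _ _ Heta Hsep' X3 Y3). reflexivity.
Qed.

(* A Lipschitz image of a square is two-dimensional, so it cannot meet all
   N^3 points of a cubic grid of mesh eta once N^3 exceeds the number of
   nodes needed to approximate the square to precision eta / (4 L). *)
Lemma exists_small_shift_not_hits delta : 0 < delta ->
  exists x y z, 0 <= x < delta /\ 0 <= y < delta /\ 0 <= z < delta /\ ~ hits x y z.
Proof.
  intros Hdelta.
  destruct (INR_unbounded (8 * L * R0 / delta)) as [m Hm].
  assert (Hpos : 0 < 8 * L * R0 / delta) by (apply Rdiv_lt_0_compat; nra).
  assert (Hm0 : (0 < m)%nat) by (destruct m; [simpl in Hm; lra|lia]).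
  set (N := ((m + 1) * (m + 1) + 1)%nat).
  set (K := (N * m)%nat).
  set (eta := delta / INR N).
  assert (HN : 0 < INR N) by (apply lt_0_INR; unfold N; lia).
  assert (HK : (0 < K)%nat) by (unfold K, N; nia).
  assert (Heta : 0 < eta) by (apply Rdiv_lt_0_compat; lra).
  assert (Hsep : 4 * L * mesh K < eta).
  { unfold mesh, eta, K. rewrite mult_INR.
    assert (HmR : 0 < INR m) by (apply lt_0_INR; exact Hm0).
    apply (Rmult_lt_reg_r (INR N * INR m / delta)); [apply Rdiv_lt_0_compat; nra|].
    replace (4 * L * (2 * R0 / (INR N * INR m)) * (INR N * INR m / delta))
      with (8 * L * R0 / delta) by (field; lra).
    replace (delta / INR N * (INR N * INR m / delta)) with (INR m) by (field; lra).
    exact Hm. }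
  assert (Hrange : forall i, (i < N)%nat -> 0 <= INR i * eta < delta).
  { intros i Hi. apply lt_INR in Hi. split; [apply Rmult_le_pos; [apply pos_INR|lra]|].
    replace delta with (INR N * eta) by (unfold eta; field; lra). nra. }
  destruct (classic (exists i j k, (i < N)%nat /\ (j < N)%nat /\ (k < N)%nat /\
                       ~ hits (INR i * eta) (INR j * eta) (INR k * eta)))
    as [[i [j [k [Hi [Hj [Hk Hnot]]]]]] | Hall].
  - exists (INR i * eta), (INR j * eta), (INR k * eta). auto.
  - exfalso.
    assert (Hcard : (N * N * N <= S K * S K)%nat).
    { apply (hits_grid_card N K eta HK Heta Hsep). intros i j k Hi Hj Hk.
      apply NNPP. intros Hnot. apply Hall. exists i, j, k. auto. }
    unfold K, N in Hcard. nia.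
Qed.

End LipschitzImage.

Lemma pow_dd_sym i s t : pow_dd i s t = pow_dd i t s.
Proof.
  destruct (Req_dec s t) as [<-|Hst]; [reflexivity|].
  apply (Rmult_eq_reg_l (s - t)); [|lra].
  rewrite pow_dd_mul_sub.
  replace ((s - t) * pow_dd i t s) with (- ((t - s) * pow_dd i t s)) by ring.
  rewrite pow_dd_mul_sub. ring.
Qed.

Lemma pow_dd_nonneg i s t : 0 <= s -> 0 <= t -> 0 <= pow_dd i s t.
Proof.
  intros Hs Ht. induction i as [|i IH]; simpl; [lra|].
  pose proof (pow_le s i Hs). nra.
Qed.

Lemma pow_dd_opp i s t : pow_dd i (- s) (- t) = (-1) ^ S i * pow_dd i s t.
Proof.
  induction i as [|i IH]; simpl pow_dd; [ring|]. rewrite IH.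
  replace (- s) with (-1 * s) by ring. rewrite Rpow_mult_distr. simpl pow. ring.
Qed.

Lemma pow_even_nonneg x k : 0 <= x ^ (2 * k).
Proof. rewrite pow_mult. apply pow_le, pow2_ge_0. Qed.

Lemma pow_dd_odd_ge k s t :
  Rabs s <= Rabs t -> Rabs t ^ (2 * k) / 2 <= pow_dd (S (2 * k)) s t.
Proof.
  assert (Hnonneg : forall s t, 0 <= t -> Rabs s <= t ->
            t ^ (2 * k) / 2 <= pow_dd (S (2 * k)) s t).
  { clear s t. intros s t Ht Hst. pose proof (pow_even_nonneg t k) as Htk.
    destruct (Rle_dec 0 s) as [Hs|Hs].
    - rewrite pow_dd_sym.
      change (pow_dd (S (2 * k)) t s) with (t ^ (2 * k) + s * pow_dd (2 * k) t s).
      pose proof (Rmult_le_pos s _ Hs (pow_dd_nonneg (2 * k) t s Ht Hs)). lra.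
    - (* opposite signs: (t - s) h = t^(2k+1) + |s|^(2k+1) >= t^(2k+1) and t - s <= 2 t *)
      assert (Hs' : s ^ S (2 * k) <= 0).
      { rewrite <- tech_pow_Rmult. pose proof (pow_even_nonneg s k). nra. }
      pose proof (pow_dd_mul_sub (S (2 * k)) t s) as E. rewrite pow_dd_sym in E.
      rewrite Rabs_left in Hst by lra.
      assert (Ht' : t ^ S (2 * k) = t * t ^ (2 * k)) by reflexivity.
      pose proof (Rmult_le_pos (t + s) _ ltac:(lra) Htk).
      apply (Rmult_le_reg_l (t - s)); [lra|]. nra. }
  intros Hst. destruct (Rle_dec 0 t) as [Ht|Ht].
  - rewrite (Rabs_right t) in * by lra. apply Hnonneg; assumption.
  - rewrite <- (Rabs_Ropp t), (Rabs_right (- t)) in * by lra.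
    replace (pow_dd (S (2 * k)) s t) with (pow_dd (S (2 * k)) (- s) (- t)).
    + apply Hnonneg; [lra|rewrite Rabs_Ropp; exact Hst].
    + rewrite pow_dd_opp. replace (S (S (2 * k))) with (2 * S k)%nat by lia.
      rewrite pow_1_even. ring.
Qed.

Lemma pow_dd_abs_le W i s t : 0 <= W -> Rabs s <= W -> Rabs t <= W ->
  Rabs (pow_dd i s t) <= INR i * W ^ pred i.
Proof.
  intros HW Hs Ht. induction i as [|i IH]; [simpl; rewrite Rabs_R0; lra|].
  change (pow_dd (S i) s t) with (s ^ i + t * pow_dd i s t).
  eapply Rle_trans; [apply Rabs_triang|]. rewrite Rabs_mult, <- RPow_abs, S_INR.
  assert (Rabs s ^ i <= W ^ i) by (apply pow_incr; split; [apply Rabs_pos|exact Hs]).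
  assert (Rabs t * Rabs (pow_dd i s t) <= W * (INR i * W ^ pred i))
    by (apply Rmult_le_compat; auto using Rabs_pos).
  destruct i as [|i]; simpl pred in *; [simpl in *; lra|].
  change (W ^ S i) with (W * W ^ i) in *. lra.
Qed.

Lemma poly_dd_abs_le W q n s t : 1 <= W -> Rabs s <= W -> Rabs t <= W ->
  Rabs (poly_dd q n s t) <= sum_f_R0 (fun i => Rabs (q i)) n * (INR n * W ^ pred n).
Proof.
  intros HW Hs Ht. unfold poly_dd.
  eapply Rle_trans; [apply sum_f_R0_triangle|].
  rewrite Rmult_comm, scal_sum. apply sum_Rle. intros i Hi.
  rewrite Rabs_mult. apply Rmult_le_compat_l; [apply Rabs_pos|].
  eapply Rle_trans; [apply pow_dd_abs_le; eauto; lra|].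
  apply Rmult_le_compat; [apply pos_INR|apply pow_le; lra|apply le_INR; exact Hi|].
  apply Rle_pow; [exact HW|lia].
Qed.

Lemma poly_dd_sym q n s t : poly_dd q n s t = poly_dd q n t s.
Proof. apply sum_eq. intros i _. rewrite pow_dd_sym. reflexivity. Qed.

(* In odd degree 2k+1 the top term dominates: [pow_dd] grows like |t|^(2k)
   while the lower divided differences grow like |t|^(2k-1). *)
Lemma poly_dd_odd_zeros_bounded q k : (1 <= k)%nat -> q (S (2 * k)) <> 0 ->
  exists R0, 0 < R0 /\ forall be s t, Rabs be <= 1 ->
    poly_dd q (S (2 * k)) s t + be = 0 -> Rabs s <= R0 /\ Rabs t <= R0.
Proof.
  intros Hk Hq.
  set (j := (2 * k)%nat). set (Q := Rabs (q (S j))).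
  set (C := sum_f_R0 (fun i => Rabs (q i)) j).
  assert (HQ : 0 < Q) by (apply Rabs_pos_lt, Hq).
  assert (HC : 0 <= C) by (apply cond_pos_sum; intros; apply Rabs_pos).
  set (R0 := 2 * (C * INR j + 1) / Q + 1).
  assert (HR0 : 1 <= R0).
  { assert (0 <= 2 * (C * INR j + 1) / Q); [|unfold R0; lra].
    left. apply Rdiv_lt_0_compat; [pose proof (pos_INR j); nra|exact HQ]. }
  assert (Hlarge : forall be s t, Rabs be <= 1 -> Rabs s <= Rabs t ->
            poly_dd q (S j) s t + be = 0 -> Rabs t <= R0).
  { intros be s t Hbe Hst E. apply Rnot_lt_le. intros Ht.
    set (X := Rabs t) in *. set (Y := X ^ pred j).
    assert (HY : 1 <= Y) by (apply pow_R1_Rle; lra).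
    assert (HXj : X ^ j = X * Y) by (unfold Y, j; destruct k; [lia|reflexivity]).
    assert (Hlow : X * Y / 2 <= pow_dd (S j) s t)
      by (rewrite <- HXj; apply pow_dd_odd_ge, Hst).
    assert (Hup : Q * pow_dd (S j) s t <= C * (INR j * Y) + 1).
    { rewrite poly_dd_S in E.
      replace (Q * pow_dd (S j) s t) with (Rabs (poly_dd q j s t + be)).
      - eapply Rle_trans; [apply Rabs_triang|].
        pose proof (poly_dd_abs_le X q j s t ltac:(lra) Hst (Rle_refl _)) as Hb.
        fold C Y in Hb. lra.
      - unfold Q. rewrite <- (Rabs_right (pow_dd (S j) s t)), <- Rabs_mult by nra.
        rewrite <- Rabs_Ropp. f_equal. lra. }
    assert (Q * X <= 2 * (C * INR j + 1)).
    { apply (Rmult_le_reg_r Y); [lra|]. pose proof (pos_INR j). nra. }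
    assert (X <= 2 * (C * INR j + 1) / Q).
    { apply (Rmult_le_reg_l Q); [exact HQ|].
      replace (Q * (2 * (C * INR j + 1) / Q)) with (2 * (C * INR j + 1)) by (field; lra).
      lra. }
    unfold R0 in Ht. lra. }
  exists R0. split; [lra|]. intros be s t Hbe E.
  destruct (Rle_dec (Rabs s) (Rabs t)) as [Hst|Hts].
  - pose proof (Hlarge be s t Hbe Hst E). lra.
  - rewrite poly_dd_sym in E. pose proof (Hlarge be t s Hbe ltac:(lra) E). lra.
Qed.

Lemma poly_dd_zeros_bounded d b c : (4 <= d)%nat -> b (d - 1)%nat <> 0 -> c d <> 0 ->
  exists R0, 0 < R0 /\ forall be ga s t, Rabs be <= 1 -> Rabs ga <= 1 ->
    poly_dd b (d - 1) s t + be = 0 -> poly_dd c d s t + ga = 0 ->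
    Rabs s <= R0 /\ Rabs t <= R0.
Proof.
  intros Hd Hb Hc. destruct (Nat.Even_or_Odd d) as [[m Hm]|[m Hm]].
  - replace (d - 1)%nat with (S (2 * (m - 1))) in * by lia.
    destruct (poly_dd_odd_zeros_bounded b (m - 1) ltac:(lia) Hb) as [R0 [HR0 Hbnd]].
    exists R0. split; [exact HR0|]. intros be ga s t Hbe _ Eb _. exact (Hbnd be s t Hbe Eb).
  - replace d with (S (2 * m)) in * by lia.
    destruct (poly_dd_odd_zeros_bounded c m ltac:(lia) Hc) as [R0 [HR0 Hbnd]].
    exists R0. split; [exact HR0|]. intros be ga s t _ Hga _ Ec. exact (Hbnd ga s t Hga Ec).
Qed.

Definition bump (a : nat -> R) (n : nat) (x : R) : nat -> R :=
  fun i => if Nat.eqb i n then a i + x else a i.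

Lemma bump_same a n x : bump a n x n = a n + x.
Proof. unfold bump. rewrite Nat.eqb_refl. reflexivity. Qed.

Lemma bump_other a n x m : m <> n -> bump a n x m = a m.
Proof. intros Hmn. unfold bump. apply Nat.eqb_neq in Hmn. rewrite Hmn. reflexivity. Qed.

Lemma bump_dev a n x i : Rabs (bump a n x i - a i) <= Rabs x.
Proof.
  unfold bump. destruct (Nat.eqb i n).
  - replace (a i + x - a i) with x by ring. lra.
  - rewrite Rminus_diag, Rabs_R0. apply Rabs_pos.
Qed.

Lemma bump_bump_dev a n m x y i :
  Rabs (bump (bump a n x) m y i - a i) <= Rabs x + Rabs y.
Proof.
  replace (bump (bump a n x) m y i - a i)
    with ((bump (bump a n x) m y i - bump a n x i) + (bump a n x i - a i)) by ring.
  eapply Rle_trans; [apply Rabs_triang|].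
  pose proof (bump_dev (bump a n x) m y i). pose proof (bump_dev a n x i). lra.
Qed.

Lemma exists_bump_nonzero a n k : 0 < k -> exists x, Rabs x <= k /\ bump a n x n <> 0.
Proof.
  intros Hk. rewrite <- (Rabs_right k) by lra. setoid_rewrite bump_same.
  destruct (Req_dec (a n) 0) as [E|E]; [exists k|exists 0]; rewrite ?Rabs_R0;
    split; try apply Rabs_pos; lra.
Qed.

Lemma poly_dd_1 q s t : poly_dd q 1 s t = q 1%nat.
Proof. unfold poly_dd. simpl. ring. Qed.

Lemma poly_dd_bump_1 q x n s t : (1 <= n)%nat ->
  poly_dd (bump q 1 x) n s t = poly_dd q n s t + x.
Proof.
  intros Hn. induction n as [|n IH]; [lia|].
  destruct n as [|n]; [rewrite !poly_dd_1, bump_same; reflexivity|].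
  rewrite !(poly_dd_S _ (S n)), IH, bump_other by lia. ring.
Qed.

Lemma knot_of_2 a b c : b 1%nat <> 0 -> knot_of 2 a b c.
Proof.
  intros Hb. apply knot_of_poly_dd. intros s t [_ [E _]]. rewrite poly_dd_1 in E. lra.
Qed.

Lemma knot_of_3 a b c : a 1%nat <> 0 -> knot_of 3 a b c.
Proof.
  intros Ha. apply knot_of_poly_dd. intros s t [E _]. rewrite poly_dd_1 in E. lra.
Qed.

Lemma exists_linear_shift_knot d a b c delta :
  (4 <= d)%nat -> b (d - 1)%nat <> 0 -> c d <> 0 -> 0 < delta ->
  exists x y z, Rabs x <= delta /\ Rabs y <= delta /\ Rabs z <= delta /\
    knot_of d (bump a 1 x) (bump b 1 y) (bump c 1 z).
Proof.
  intros Hd Hb Hc Hdelta.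
  destruct (poly_dd_zeros_bounded d b c Hd Hb Hc) as [R0 [HR0 Hzeros]].
  destruct (regular_on_poly_dd R0 a (d - 2)) as [B1 [L1 [_ H1]]].
  destruct (regular_on_poly_dd R0 b (d - 1)) as [B2 [L2 [_ H2]]].
  destruct (regular_on_poly_dd R0 c d) as [B3 [L3 [_ H3]]].
  set (L := Rabs L1 + Rabs L2 + Rabs L3 + 1).
  pose proof (Rle_abs L1). pose proof (Rle_abs L2). pose proof (Rle_abs L3).
  pose proof (Rabs_pos L1). pose proof (Rabs_pos L2). pose proof (Rabs_pos L3).
  assert (Hmin : 0 < Rmin delta 1) by (apply Rmin_pos; lra).
  pose proof (Rmin_l delta 1). pose proof (Rmin_r delta 1).
  destruct (exists_small_shift_not_hits R0 L (poly_dd a (d - 2)) (poly_dd b (d - 1))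
              (poly_dd c d) HR0 ltac:(unfold L; lra)
              (lipschitz_on_weaken R0 L1 L _ ltac:(unfold L; lra) H1)
              (lipschitz_on_weaken R0 L2 L _ ltac:(unfold L; lra) H2)
              (lipschitz_on_weaken R0 L3 L _ ltac:(unfold L; lra) H3) _ Hmin)
    as [x [y [z [Hx [Hy [Hz Hnot]]]]]].
  exists x, y, z. rewrite !Rabs_right by lra. do 3 (split; [lra|]).
  apply knot_of_poly_dd. intros s t [E1 [E2 E3]].
  rewrite poly_dd_bump_1 in E1, E2, E3 by lia.
  destruct (Hzeros y z s t) as [Hs Ht]; try (rewrite Rabs_right; lra); auto.
  apply Hnot. exists s, t. auto.
Qed.

Lemma sum_sq_dev_le a a' n k : (forall i, Rabs (a' i - a i) <= k) ->
  sum_f_R0 (fun i => (a i - a' i) ^ 2) n <= INR (S n) * k ^ 2.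
Proof.
  intros Hdev.
  assert (Hi : forall i, (a i - a' i) ^ 2 <= k ^ 2).
  { intros i. rewrite <- pow2_abs, <- Rabs_Ropp, Ropp_minus_distr.
    apply pow_incr. split; [apply Rabs_pos|apply Hdev]. }
  induction n as [|n IH]; [simpl; specialize (Hi 0%nat); lra|].
  rewrite tech5, (S_INR (S n)). specialize (Hi (S n)). lra.
Qed.

Lemma A_dist_le d a b c a' b' c' k : 0 <= k ->
  (forall i, Rabs (a' i - a i) <= k) -> (forall i, Rabs (b' i - b i) <= k) ->
  (forall i, Rabs (c' i - c i) <= k) ->
  A_dist d a b c a' b' c' <= INR (3 * S d) * k.
Proof.
  intros Hk Ha Hb Hc. unfold A_dist.
  pose proof (sum_sq_dev_le a a' (d - 2) k Ha) as Sa.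
  pose proof (sum_sq_dev_le b b' (d - 1) k Hb) as Sb.
  pose proof (sum_sq_dev_le c c' d k Hc) as Sc.
  assert (Ia : INR (S (d - 2)) <= INR (S d)) by (apply le_INR; lia).
  assert (Ib : INR (S (d - 1)) <= INR (S d)) by (apply le_INR; lia).
  assert (HD : 1 <= INR (S d)) by (rewrite S_INR; pose proof (pos_INR d); lra).
  pose proof (pow2_ge_0 k).
  rewrite <- (sqrt_pow2 (INR (3 * S d) * k)) by (apply Rmult_le_pos; [apply pos_INR|exact Hk]).
  apply sqrt_le_1_alt. rewrite mult_INR.
  replace ((INR 3 * INR (S d) * k) ^ 2) with (9 * INR (S d) * INR (S d) * k ^ 2)
    by (simpl; ring).
  pose proof (Rmult_le_compat_r _ _ _ H Ia). pose proof (Rmult_le_compat_r _ _ _ H Ib).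
  assert (HDk : 0 <= INR (S d) * k ^ 2) by (apply Rmult_le_pos; lra).
  pose proof (Rmult_le_compat_r _ _ _ HDk HD).
  lra.
Qed.

Lemma dense_in_A_of_close d (P : (nat -> R) -> (nat -> R) -> (nat -> R) -> Prop) :
  (forall a b c k, 0 < k -> exists a' b' c', P a' b' c' /\
     (forall i, Rabs (a' i - a i) <= k) /\ (forall i, Rabs (b' i - b i) <= k) /\
     (forall i, Rabs (c' i - c i) <= k)) ->
  dense_in_A d P.
Proof.
  intros Hclose a b c eps Heps.
  assert (HD : 0 < INR (3 * S d)) by (apply lt_0_INR; lia).
  destruct (Hclose a b c (eps / (2 * INR (3 * S d)))) as [a' [b' [c' [HP [Ha [Hb Hc]]]]]].
  { apply Rdiv_lt_0_compat; lra. }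
  exists a', b', c'. split; [exact HP|].
  eapply Rle_lt_trans; [apply A_dist_le; eauto; left; apply Rdiv_lt_0_compat; lra|].
  replace (INR (3 * S d) * (eps / (2 * INR (3 * S d)))) with (eps / 2) by (field; lra). lra.
Qed.

Lemma dense_in_A_mono d (P P' : (nat -> R) -> (nat -> R) -> (nat -> R) -> Prop) :
  (forall a b c, P a b c -> P' a b c) -> dense_in_A d P -> dense_in_A d P'.
Proof.
  intros HPP' HP a b c eps Heps.
  destruct (HP a b c eps Heps) as [a' [b' [c' [Ha' Hd]]]]. exists a', b', c'. auto.
Qed.

Lemma has_deg_top a n : a n <> 0 -> has_deg a n (Z.of_nat n).
Proof. intros Ha. right. exists n. repeat split; auto; lia. Qed.

Lemma in_Q_in_P d a b c : (2 <= d)%nat -> in_Q d a b c -> in_P d a b c.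
Proof.
  intros Hd [Hknot [Ha [Hb Hc]]]. split; [exact Hknot|].
  exists (Z.of_nat (d - 2)), (Z.of_nat (d - 1)), (Z.of_nat d).
  repeat split; try apply has_deg_top; auto; lia.
Qed.

Lemma dense_Q d : (2 <= d)%nat -> dense_in_A d (in_Q d).
Proof.
  intros Hd. apply dense_in_A_of_close. intros a b c k Hk.
  destruct (exists_bump_nonzero a (d - 2) (k / 2)) as [xa [Hxa Ha]]; [lra|].
  destruct (exists_bump_nonzero b (d - 1) (k / 2)) as [xb [Hxb Hb]]; [lra|].
  destruct (exists_bump_nonzero c d (k / 2)) as [xc [Hxc Hc]]; [lra|].
  set (a0 := bump a (d - 2) xa). set (b0 := bump b (d - 1) xb). set (c0 := bump c d xc).
  destruct (Nat.le_gt_cases 4 d) as [Hd4|Hd3].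
  - destruct (exists_linear_shift_knot d a0 b0 c0 (k / 2) Hd4 Hb Hc ltac:(lra))
      as [ya [yb [yc [Hya [Hyb [Hyc Hknot]]]]]].
    exists (bump a0 1 ya), (bump b0 1 yb), (bump c0 1 yc).
    split; [split; [exact Hknot|]; rewrite !bump_other by lia; auto|].
    repeat split; intros i; eapply Rle_trans; try apply bump_bump_dev; lra.
  - assert (Hknot : knot_of d a0 b0 c0).
    { assert (Hd23 : (d = 2 \/ d = 3)%nat) by lia.
      destruct Hd23 as [->| ->]; [apply knot_of_2, Hb|apply knot_of_3, Ha]. }
    exists a0, b0, c0. split; [split; auto|].
    repeat split; intros i; eapply Rle_trans; try apply bump_dev; lra.
Qed.

Theorem mainTheorem13 (d : nat) (hd : (2 <= d)%nat) :
  dense_in_A d (in_Q d) /\ dense_in_A d (in_P d) /\ dense_in_A d (in_O d).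
Proof.
  pose proof (dense_Q d hd) as HQ.
  assert (HP : dense_in_A d (in_P d))
    by (apply (dense_in_A_mono d (in_Q d)); auto using in_Q_in_P).
  split; [exact HQ|split; [exact HP|]].
  apply (dense_in_A_mono d (in_P d)); [intros a b c [Hknot _]; exact Hknot|exact HP].
Qed.
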